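(* Let $c\colon[0,1]\to\mathbb{R}^n$ be a continuous curve and let $X$ be an open and dense subset of $\mathbb{R}^n$. Then there exists a dense set $A\subset\mathbb{R}^n$ (in fact a set of second Baire category) such that for each $\alpha\in A$ the set $F_\alpha:=\{t\in[0,1]\,:\, c(t)+\alpha\in X\}$ is open and dense in $[0,1]$. *)

From HB Require Import structures.
From mathcomp Require Import all_boot all_order all_algebra.
From mathcomp Require Import all_classical all_reals all_analysis.
Set Implicit Arguments. Unset Strict Implicit. Unset Printing Implicit Defensive.
Import Order.TTheory GRing.Theory Num.Theory.
Import numFieldNormedType.Exports.
Local Open Scope classical_set_scope.
Local Open Scope ring_scope.

Definition open_in (T : topologicalType) (Y S : set T) : Prop :=
  exists U : set T, open U /\ S = U `&` Y.

Definition dense_in (T : topologicalType) (Y S : set T) : Prop :=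
  S `<=` Y /\
  forall U : set T, open U -> (U `&` Y) !=set0 -> (U `&` S) !=set0.

Definition nowhere_dense (T : topologicalType) (S : set T) : Prop :=
  (closure S)° = set0.

Definition meager (T : topologicalType) (S : set T) : Prop :=
  exists F : (set T)^nat, (forall k, nowhere_dense (F k)) /\ S `<=` \bigcup_k F k.

Definition second_category (T : topologicalType) (S : set T) : Prop := ~ meager S.

From HB Require Import structures.
From mathcomp Require Import all_boot all_order all_algebra.
From mathcomp Require Import all_classical all_reals all_analysis.
From mathcomp Require Import lra.
Set Implicit Arguments.
Unset Strict Implicit.
Unset Printing Implicit Defensive.
Import Order.TTheory GRing.Theory Num.Theory.
Import numFieldNormedType.Exports.
Local Open Scope classical_set_scope.
Local Open Scope ring_scope.

(* For a rational interval J meeting [0, 1], the translations a for which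
   c + a meets X somewhere over J form an open set (X is open) which is dense
   (X is dense, and translating X by -c(t) keeps it dense).  Intersecting over
   the countably many rational intervals gives, by Baire, a dense set A of
   second category; for a in A, F_a is relatively open by continuity of c and
   meets every rational interval that meets [0, 1], hence is dense. *)

(* Completeness of matrices is not canonical in the library; Baire needs it. *)
HB.instance Definition _ (R : realType) (m n : nat) := Complete.on 'M[R]_(m, n).

Section Translation.
Variables (R : numFieldType) (V : normedModType R).

Lemma open_translate (X : set V) (a : V) : open X -> open [set y | X (y + a)].
Proof.
move=> oX; apply: (continuousP (+%R^~ a)).1 oX => y.
exact: (continuousD cvg_id (cvg_cst a)).
Qed.

Lemma dense_translate (X : set V) (a : V) :
  dense X -> dense [set y | X (y + a)].
Proof.
move=> dX O [y Oy] oO.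
have [z [Oz Xz]] : exists z, ([set z | O (z - a)] `&` X) z.
  by apply: dX; [exists (y + a); rewrite /= addrK | exact: open_translate].
by exists (z - a); rewrite /= subrK.
Qed.

End Translation.

Lemma denseS (T : topologicalType) (A B : set T) :
  A `<=` B -> dense A -> dense B.
Proof.
by move=> AB dA O O0 oO; have [x [Ox /AB Bx]] := dA O O0 oO; exists x.
Qed.

Section HittingTranslations.
Variables (R : numFieldType) (V : normedModType R) (T : Type).
Variables (c : T -> V) (X : set V).

(* The implication makes the set trivially the whole space when [S] is empty,
   so that it is open and dense for every [S]. *)
Definition hitting_translations (S : set T) : set V :=
  [set a | S !=set0 -> exists2 t, S t & X (c t + a)].

Lemma open_hitting_translations (S : set T) :
  open X -> open (hitting_translations S).
Proof.
move=> oX; have [S0|nS] := pselect (S !=set0); last first.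
  suff -> : hitting_translations S = setT by exact: openT.
  by apply/seteqP; split=> // a _ /nS.
suff -> : hitting_translations S = \bigcup_(t in S) [set a | X (a + c t)].
  by apply: bigcup_open => t _; exact: open_translate.
apply/seteqP; split=> a /=.
  by case/(_ S0) => t St Xt; exists t => //=; rewrite addrC.
by case=> t St Xt _; exists t; rewrite // addrC.
Qed.

Lemma dense_hitting_translations (S : set T) :
  dense X -> dense (hitting_translations S).
Proof.
move=> dX; have [[t St]|nS] := pselect (S !=set0); last first.
  by move=> O [x Ox] _; exists x; split=> // /nS.
apply: (denseS _ (dense_translate (c t) dX)) => a Xa _.
by exists t; rewrite // addrC.
Qed.

End HittingTranslations.

Lemma dense_compl_closure (T : topologicalType) (F : set T) :
  nowhere_dense F -> dense (~` closure F).
Proof.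
move=> ndF O [x Ox] oO; apply: contrapT => nOF.
have OF : O `<=` closure F.
  by move=> y Oy; apply: contrapT => Fy; apply: nOF; exists y.
suff : (closure F)° x by rewrite ndF.
by apply: interiorS OF _ _; rewrite (interior_id O).1.
Qed.

Lemma bigcap_open_dense_second_category (R : realType)
    (V : completeNormedModType R) (F : (set V)^nat) :
  (forall k, open (F k) /\ dense (F k)) -> second_category (\bigcap_k F k).
Proof.
move=> oF [G [ndG FG]].
have oFG k : open (F k `&` ~` closure (G k)) /\
             dense (F k `&` ~` closure (G k)).
  have [oFk dFk] := oF k; split.
    by apply: openI => //; exact/closed_openC/closed_closure.
  by apply: denseI => //; exact: dense_compl_closure.
have [a [_ FGa]] := Baire oFG (ex_intro _ 0 I) openT.
have [k _ Gka] := FG a (fun k _ => (FGa k I).1).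
by apply: (FGa k I).2; exact: subset_closure.
Qed.

Lemma open_in_preimage (T U : topologicalType) (D : set T) (f : T -> U)
    (W : set U) :
  {within D, continuous f} -> open W -> open_in D [set t | D t /\ W (f t)].
Proof.
move=> cf oW.
have := (continuousP (from_subspace D f)).1 cf W oW.
case/open_subspaceP => O oO OD.
exists O; split => //; rewrite OD.
by apply/seteqP; split=> t [].
Qed.

Lemma dense_in_of_rat_intervals (R : realType) (D F : set R) :
  F `<=` D ->
  (forall p q : rat, ([set s | ratr p < s < ratr q] `&` D) !=set0 ->
                     ([set s | ratr p < s < ratr q] `&` F) !=set0) ->
  dense_in D F.
Proof.
move=> FD meetF; split=> // U oU [t [Ut Dt]].
have /nbhs_ballP [r /= r0 rU] : nbhs t U by exact: open_nbhs_nbhs.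
have [|p] := @rat_in_itvoo _ (t - r) t; first lra.
rewrite in_itv /= => /andP[rp pt].
have [|q] := @rat_in_itvoo _ t (t + r); first lra.
rewrite in_itv /= => /andP[tq qr].
have [|s [/andP[ps sq] Fs]] := meetF p q.
  by exists t; split=> //; apply/andP; split; lra.
exists s; split=> //; apply: rU.
by rewrite -ball_normE /= ltr_distlC; apply/andP; split; lra.
Qed.

Theorem lemma2p1 (R : realType) (n : nat) (c : R -> 'rV[R]_n)
    (X : set 'rV[R]_n) :
  {within `[0, 1], continuous c} ->
  open X -> dense X ->
  exists A : set 'rV[R]_n,
    dense A /\ second_category A /\
    forall alpha : 'rV[R]_n, A alpha ->
      open_in (`[0, 1] : set R) [set t : R | t \in `[0, 1] /\ X (c t + alpha)] /\
      dense_in (`[0, 1] : set R) [set t : R | t \in `[0, 1] /\ X (c t + alpha)].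
Proof.
move=> cc oX dX.
pose J k : set R := if unpickle k is Some (p, q)
  then [set s | ratr p < s < ratr q] `&` `[0, 1] else set0.
pose B k := hitting_translations c X (J k).
have oB k : open (B k) /\ dense (B k)
  by split; [exact: open_hitting_translations | exact: dense_hitting_translations].
exists (\bigcap_k B k); split; first exact: Baire.
split; first exact: bigcap_open_dense_second_category.
move=> alpha Balpha; split.
  exact: open_in_preimage cc (open_translate alpha oX).
apply: dense_in_of_rat_intervals => [t [] //|p q pq01].
have := Balpha (pickle (p, q)) I; rewrite /B /J pickleK.
by case/(_ pq01) => t [pqt t01] Xt; exists t; split; last split.
Qed.
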